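(* For every integer $k\ge 2$, there is a connected 2-degenerate graph of order $n=5k+1$ with exactly $4^{k}=4^{(n-1)/5}$ inclusion-minimal connected dominating sets; hence the maximum number of minimal connected dominating sets in 2-degenerate graphs of order $n$ is $\Omega(1.3195^n)$.
   Context: A graph is 2-degenerate if there is an ordering $(v_1,\dots,v_n)$ of its vertices such that each $v_i$ has degree at most $2$ in $G[\{v_i,\dots,v_n\}]$. A connected dominating set of a graph $G=(V,E)$ is a set $S\subseteq V$ such that every vertex outside $S$ has a neighbor in $S$ and $G[S]$ is connected; it is (inclusion-)minimal if no proper subset is one. (The witnessing graph $G_2^k$ consists of $k$ disjoint copies of the graph on $\{x_1,x_2,y_1,y_2,z\}$ with edges $x_1x_2$, $x_1y_2$, $x_2y_1$, $zy_1$, $zy_2$, plus a vertex $s$ adjacent to all $x$-vertices of all copies.) *)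

From mathcomp Require Import all_boot all_order all_algebra.
Set Implicit Arguments. Unset Strict Implicit. Unset Printing Implicit Defensive.

Section Graphs.
Variable T : finType.

Definition simple_graph (e : rel T) : Prop := symmetric e /\ irreflexive e.

Definition connected_graph (e : rel T) : Prop := forall x y : T, connect e x y.

Definition induced (e : rel T) (S : {set T}) : rel T :=
  [rel x y | [&& x \in S, y \in S & e x y]].

Definition induced_connected (e : rel T) (S : {set T}) : bool :=
  [forall x in S, forall y in S, connect (induced e S) x y].

Definition dominating (e : rel T) (S : {set T}) : bool :=
  [forall v, (v \notin S) ==> [exists u in S, e v u]].

Definition connected_dominating (e : rel T) (S : {set T}) : bool :=
  dominating e S && induced_connected e S.

Definition minimal_cds (e : rel T) (S : {set T}) : bool :=
  connected_dominating e S &&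
  [forall S' : {set T}, (S' \proper S) ==> ~~ connected_dominating e S'].

Definition num_minimal_cds (e : rel T) : nat := #|[set S | minimal_cds e S]|.

(* 2-degenerate: an ordering (v_1,...,v_n) of all vertices in which each v_i
   has degree at most 2 in G[{v_i,...,v_n}], i.e. at most 2 neighbours
   among the later vertices (e is irreflexive) *)
Definition two_degenerate (e : rel T) : Prop :=
  exists s : seq T, perm_eq s (enum T) /\
    forall (s1 s2 : seq T) (x : T), s = s1 ++ x :: s2 -> count (e x) s2 <= 2.
End Graphs.

(* Every connected dominating set S contains s, since the copies are joined only
   through s.  Each copy is the 5-cycle x1 x2 y1 z y2 whose edge x1 x2 is joined to
   s; S must dominate y1, z and y2, and no component of S inside a copy may avoid
   x1 and x2, which forces S to contain, in every copy, one of the four runs of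
   three consecutive cycle vertices meeting {x1, x2}.  Conversely s together with
   one such run per copy is a connected dominating set, and these 4^k sets form an
   antichain, so they are exactly the minimal ones. *)

From mathcomp Require Import all_boot all_order all_algebra zify lra.
Set Implicit Arguments. Unset Strict Implicit. Unset Printing Implicit Defensive.

Section GraphFacts.
Variables (T : finType) (e : rel T).

Lemma induced_symmetric (S : {set T}) : symmetric e -> symmetric (induced e S).
Proof. by move=> sym_e x y; rewrite /induced /= sym_e andbCA. Qed.

Lemma induced_connected_closed (S : {set T}) (C : pred T) x y :
  induced_connected e S -> x \in S -> y \in S ->
  (forall u v, C u -> induced e S u v -> C v) -> C x -> C y.
Proof.
move=> /forallP/(_ x) + xS yS; rewrite xS => /forallP/(_ y); rewrite yS.
move=> /connectP[p + ->] closedC {xS yS}.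
by elim: p x => //= z p IH x /andP[xz pz] Cx; apply: IH pz (closedC _ _ Cx xz).
Qed.

Lemma induced_connected_descent (S : {set T}) (root : T) (m : T -> nat) :
  symmetric e -> root \in S ->
  (forall u, u \in S -> u != root -> exists2 v, v \in S & e u v && (m v < m u)) ->
  induced_connected e S.
Proof.
move=> sym_e rootS descent.
have to_root n u : m u <= n -> u \in S -> connect (induced e S) u root.
  elim: n u => [|n IH] u mu uS; have [-> //|u_root] := eqVneq u root;
    have [v vS /andP[uv mvu]] := descent u uS u_root.
    by have := leq_trans mvu mu.
  by apply: connect_trans (IH v _ vS); [apply: connect1; rewrite /induced /= uS vS | lia].
apply/forallP => x; apply/implyP => xS; apply/forallP => y; apply/implyP => yS.
apply: connect_trans (to_root _ x (leqnn _) xS) _.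
by rewrite (sym_connect_sym (induced_symmetric S sym_e)) (to_root _ y (leqnn _)).
Qed.

Lemma connected_of_cds (S : {set T}) :
  symmetric e -> connected_dominating e S -> connected_graph e.
Proof.
move=> sym_e /andP[/forallP dom /forallP conn] x y.
have near v : exists2 s, s \in S & connect e v s.
  have [vS|vNS] := boolP (v \in S); first by exists v.
  have /existsP[s /andP[sS vs]] := implyP (dom v) vNS.
  by exists s => //; apply: connect1.
have [sx sxS xsx] := near x; have [sy syS ysy] := near y.
apply: connect_trans xsx _; rewrite (sym_connect_sym sym_e).
apply: connect_trans ysy _; rewrite (sym_connect_sym sym_e).
have := implyP (conn sx) sxS => /forallP/(_ sy); rewrite syS /=.
by apply: connect_sub => u v /andP[_ /andP[_ uv]]; apply: connect1.
Qed.

Lemma minimal_cds_setE (F : {set {set T}}) :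
  {in F, forall A, connected_dominating e A} ->
  (forall B, connected_dominating e B -> exists2 A, A \in F & A \subset B) ->
  {in F &, forall A B : {set T}, A \subset B -> A = B} ->
  [set S | minimal_cds e S] = F.
Proof.
move=> Fcds cover antichain; apply/setP => S; rewrite inE.
apply/andP/idP => [[cdsS /forallP minS] | FS].
  have [A FA AS] := cover S cdsS.
  suff SA : S \subset A by rewrite (_ : S = A) //; apply/eqP; rewrite eqEsubset SA.
  apply/negPn/negP => SnA; move: (minS A).
  by rewrite properE AS SnA Fcds.
split; first exact: Fcds.
apply/forallP => B; apply/implyP => BS; apply/negP => cdsB.
have [A FA AB] := cover B cdsB.
have eqAS := antichain _ _ FA FS (subset_trans AB (proper_sub BS)).
by move: BS; rewrite -eqAS properE AB andbF.
Qed.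

Lemma two_degenerate_of_key (key : T -> nat) :
  (forall x, #|[pred y | e x y & key x <= key y]| <= 2) -> two_degenerate e.
Proof.
move=> few; pose le_key := [rel u v : T | key u <= key v].
exists (sort le_key (enum T)); split; first by rewrite perm_sort.
move=> s1 s2 x sE.
have : uniq (s1 ++ x :: s2) by rewrite -sE sort_uniq enum_uniq.
rewrite cat_uniq => /and3P[_ _ /andP[_ uniq_s2]].
have : sorted le_key (s1 ++ x :: s2).
  by rewrite -sE; apply/sort_sorted => u v; apply: leq_total.
have le_key_trans : transitive le_key by move=> v u w; apply: leq_trans.
rewrite sorted_cat_cons => /andP[_ /(order_path_min le_key_trans)/allP later].
rewrite -size_filter -(card_uniqP (filter_uniq _ uniq_s2)).
apply: leq_trans (few x); apply: subset_leq_card; apply/subsetP => y.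
by rewrite mem_filter !inE => /andP[-> /later].
Qed.

End GraphFacts.

Lemma card_bijective (A B : finType) : #|A| = #|B| -> exists f : A -> B, bijective f.
Proof.
move=> eqAB; exists (fun x => enum_val (cast_ord eqAB (enum_rank x))).
apply: inj_card_bij; last by rewrite eqAB.
by move=> x y /enum_val_inj/cast_ord_inj/enum_rank_inj.
Qed.

Lemma forall_bij (A B : finType) (h : A -> B) (P : pred B) :
  bijective h -> [forall x, P (h x)] = [forall y, P y].
Proof. by case=> h' _ hK; apply/forallP/forallP => Ph y //; rewrite -[y]hK. Qed.

Lemma exists_bij (A B : finType) (h : A -> B) (P : pred B) :
  bijective h -> [exists x, P (h x)] = [exists y, P y].
Proof.
case=> h' _ hK; apply/existsP/existsP => [[x Px]|[y Py]]; first by exists (h x).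
by exists (h' y); rewrite hK.
Qed.

Section Isomorphism.
Variables (T T' : finType) (f : T -> T') (g : T' -> T).
Hypotheses (fK : cancel f g) (gK : cancel g f).
Variable e : rel T'.

Let f_bij : bijective f. Proof. exact: Bijective fK gK. Qed.

Lemma connect_relpre (r : rel T') x y :
  connect (relpre f r) x y = connect r (f x) (f y).
Proof.
apply/connectP/connectP => [[p pr ->]|[p pr yE]].
  by exists (map f p); rewrite ?path_map ?last_map.
exists (map g p); first by rewrite -path_map mapK.
by rewrite -[y]fK yE -[in RHS](fK x) last_map.
Qed.

Lemma simple_graph_relpre : simple_graph e -> simple_graph (relpre f e).
Proof. by case=> sym_e irr_e; split=> [x y|x]; [apply: sym_e | apply: irr_e]. Qed.

Lemma connected_graph_relpre : connected_graph e -> connected_graph (relpre f e).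
Proof. by move=> conn_e x y; rewrite connect_relpre. Qed.

Lemma two_degenerate_relpre : two_degenerate e -> two_degenerate (relpre f e).
Proof.
case=> s [s_enum deg]; exists (map g s); split.
  apply: perm_trans (perm_map g s_enum) _; apply: uniq_perm.
  - by rewrite (map_inj_uniq (can_inj gK)) enum_uniq.
  - exact: enum_uniq.
  by move=> x; rewrite mem_enum -[x]fK map_f ?mem_enum.
move=> s1 s2 x sE; rewrite -(count_map f (e (f x))); apply: (deg (map f s1)).
by rewrite -[s](mapK gK) sE map_cat.
Qed.

Lemma subset_preimset (X Y : {set T'}) : (f @^-1: X \subset f @^-1: Y) = (X \subset Y).
Proof.
have preK (Z : {set T'}) : g @^-1: (f @^-1: Z) = Z by apply/setP => y; rewrite !inE gK.
by apply/idP/idP => [/(preimsetS g)|/preimsetS]; rewrite ?preK.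
Qed.

Lemma connected_dominating_preimset (X : {set T'}) :
  connected_dominating (relpre f e) (f @^-1: X) = connected_dominating e X.
Proof.
rewrite /connected_dominating /dominating /induced_connected -!(forall_bij _ f_bij).
congr (_ && _); apply: eq_forallb => x; rewrite inE.
  by congr (_ ==> _); rewrite -(exists_bij _ f_bij); apply: eq_existsb => u; rewrite inE.
rewrite -(forall_bij _ f_bij); congr (_ ==> _); apply: eq_forallb => y.
rewrite inE -connect_relpre; congr (_ ==> _); apply: eq_connect => u v.
by rewrite /induced /= !inE.
Qed.

Lemma minimal_cds_preimset (X : {set T'}) :
  minimal_cds (relpre f e) (f @^-1: X) = minimal_cds e X.
Proof.
have preim_bij : bijective (fun Y : {set T'} => f @^-1: Y).
  by exists (fun S : {set T} => g @^-1: S) => Y; apply/setP => z; rewrite !inE ?fK ?gK.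
rewrite /minimal_cds connected_dominating_preimset -(forall_bij _ preim_bij).
congr (_ && _); apply: eq_forallb => Y.
by rewrite !properE !subset_preimset connected_dominating_preimset.
Qed.

Lemma num_minimal_cds_relpre : num_minimal_cds (relpre f e) = num_minimal_cds e.
Proof.
have preim_bij : bijective (fun S : {set T} => g @^-1: S).
  by exists (fun Y : {set T'} => f @^-1: Y) => S; apply/setP => z; rewrite !inE ?fK ?gK.
rewrite /num_minimal_cds -(on_card_preimset (onW_bij _ preim_bij)).
apply: eq_card => S; rewrite !inE -minimal_cds_preimset.
by congr (minimal_cds _ _); apply/setP => x; rewrite !inE fK.
Qed.

End Isomorphism.

(* Positions 0, 1, 2, 3, 4 of a gadget are x1, x2, y1, z, y2, in cycle order;
   s is joined to positions 0 and 1. *)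
Definition gadget_adj (r r' : nat) : bool := (r.+1 %% 5 == r') || (r'.+1 %% 5 == r).

(* The three consecutive positions starting at o + 3 (mod 5), the + 7 avoiding
   truncated subtraction: as o ranges over 'I_4 these are the runs of length 3
   meeting {0, 1}. *)
Definition gadget_arc (o : 'I_4) (r : nat) : bool := (r + 7 - o) %% 5 < 3.

(* Distance from position r to {0, 1} along the cycle. *)
Definition gadget_depth (r : nat) : nat := nth 0 [:: 0; 0; 1; 2; 1] r.

Lemma gadget_arc_inj (a b : 'I_4) :
  (forall r, r < 5 -> gadget_arc a r -> gadget_arc b r) -> a = b.
Proof.
case: a b => [[|[|[|[|a]]]] ?] [[|[|[|[|b]]]] ?] //= sub; apply/val_inj => //=;
by [have := sub 0 isT isT | have := sub 1 isT isT | have := sub 2 isT isT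
   | have := sub 3 isT isT | have := sub 4 isT isT].
Qed.

Lemma gadget_arc_dominating (o : 'I_4) r : r < 5 -> ~~ gadget_arc o r ->
  exists2 r', r' < 5 & gadget_arc o r' && gadget_adj r r'.
Proof.
case: o => [[|[|[|[|o]]]] ?] //; case: r => [|[|[|[|[|r]]]]] //= _ _;
by [exists 0 | exists 1 | exists 2 | exists 3 | exists 4].
Qed.

Lemma gadget_arc_descent (o : 'I_4) r : 2 <= r < 5 -> gadget_arc o r ->
  exists2 r', r' < 5 &
    [&& gadget_arc o r', gadget_adj r r' & gadget_depth r' < gadget_depth r].
Proof.
case: o => [[|[|[|[|o]]]] ?] //; case: r => [|[|[|[|[|r]]]]] //= _ _;
by [exists 0 | exists 1 | exists 2 | exists 3 | exists 4].
Qed.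

(* [L] is the trace of a connected dominating set on one copy: it dominates y1, z,
   y2, and every part of it inside an interval [a, b] of {y1, z, y2} leaves the
   interval. *)
Lemma gadget_arc_of_local (L : pred nat) :
  (forall r, 2 <= r < 5 -> [|| L r, L r.-1 | L (r.+1 %% 5)]) ->
  (forall a b r, 2 <= a <= r -> r <= b < 5 -> L r -> L a.-1 || L (b.+1 %% 5)) ->
  exists o : 'I_4, forall r, r < 5 -> gadget_arc o r -> L r.
Proof.
move=> dom leave.
suff : [|| [&& L 3, L 4 & L 0], [&& L 4, L 0 & L 1],
           [&& L 0, L 1 & L 2] | [&& L 1, L 2 & L 3]].
  case/or4P => /and3P[? ? ?];
    [exists ord0 | exists (inord 1) | exists (inord 2) | exists (inord 3)];
    by move=> [|[|[|[|[|r]]]]]; rewrite /gadget_arc ?inordK.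
move: (dom 2 isT) (dom 3 isT) (dom 4 isT) (leave 2 2 2 isT isT) (leave 3 3 3 isT isT)
  (leave 4 4 4 isT isT) (leave 2 3 2 isT isT) (leave 2 3 3 isT isT) (leave 3 4 3 isT isT)
  (leave 3 4 4 isT isT) (leave 2 4 2 isT isT) (leave 2 4 3 isT isT) (leave 2 4 4 isT isT).
rewrite ?modnn ?(@modn_small _ 5) //=.
by case: (L 0) (L 1) (L 2) (L 3) (L 4) => [] [] [] [] [] //=; intuition.
Qed.

Section Construction.
Variable I : finType.
(* [None] is s and [Some (i, r)] is position r of copy i. *)
Local Notation vertex := (option (I * 'I_5)).

Definition g2_adj : rel vertex := fun u v =>
  match u, v with
  | Some (i, r), Some (j, r') => (i == j) && gadget_adj r r'
  | Some (_, r), None | None, Some (_, r) => r < 2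
  | None, None => false
  end.

Lemma g2_adj_sym : symmetric g2_adj.
Proof. by move=> [[i r]|] [[j r']|] //=; rewrite eq_sym /gadget_adj orbC. Qed.

Lemma g2_adj_simple : simple_graph g2_adj.
Proof.
split; first exact: g2_adj_sym.
by move=> [[i r]|] //=; rewrite eqxx /gadget_adj orbb; apply/eqP; have := ltn_ord r; lia.
Qed.

Lemma g2_adj_copy i (r : 'I_5) v : 2 <= r -> g2_adj (Some (i, r)) v ->
  exists2 r' : 'I_5, v = Some (i, r') & gadget_adj r r'.
Proof.
case: v => [[j r']|] /= r_ge2; last by rewrite ltnNge r_ge2.
by case/andP=> /eqP <- adj_rr'; exists r'.
Qed.

(* Eliminate z, y1, y2, x1, x2 in every copy, and s last. *)
Definition degeneracy_key (v : vertex) : nat :=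
  if v is Some (_, r) then nth 0 [:: 3; 4; 1; 0; 2] r else 5.

Lemma g2_later_neighbours_le2 x :
  #|[pred y | g2_adj x y & degeneracy_key x <= degeneracy_key y]| <= 2.
Proof.
have le2 a b :
    {subset [pred y | g2_adj x y & degeneracy_key x <= degeneracy_key y] <= [:: a; b]} ->
    #|[pred y | g2_adj x y & degeneracy_key x <= degeneracy_key y]| <= 2.
  by move=> sub; apply: leq_trans (subset_leq_card (introT subsetP sub)) (card_size _).
case: x le2 => [[i [[|[|[|[|[|r]]]]] r5]]|] // le2;
  [ apply: (le2 (Some (i, inord 1)) None)
  | apply: (le2 None None)
  | apply: (le2 (Some (i, inord 1)) (Some (i, inord 1)))
  | apply: (le2 (Some (i, inord 2)) (Some (i, inord 4)))
  | apply: (le2 (Some (i, inord 0)) (Some (i, inord 0)))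
  | apply: (le2 None None) ];
  move=> -[[j q]|]; rewrite !inE //=; try case/andP => /andP[/eqP <- +];
  by case: q => [[|[|[|[|[|q]]]]] ?] //= _ _; rewrite -[Ordinal _]inord_val eqxx ?orbT.
Qed.

Definition cds_of (h : {ffun I -> 'I_4}) : {set vertex} :=
  [set v : vertex | if v is Some (i, r) then gadget_arc (h i) r else true].

Lemma cds_of_cds h : connected_dominating g2_adj (cds_of h).
Proof.
apply/andP; split.
  apply/forallP => -[[i r]|]; rewrite inE //=; apply/implyP => not_arc.
  have [r' r'5 /andP[arc_r' adj_rr']] := gadget_arc_dominating (ltn_ord r) not_arc.
  by apply/existsP; exists (Some (i, Ordinal r'5)); rewrite inE /= arc_r' eqxx.
pose m (v : vertex) := if v is Some (_, r) then (gadget_depth r).+1 else 0.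
apply: (@induced_connected_descent _ g2_adj _ None m g2_adj_sym); first by rewrite inE.
move=> [[i r]|] //; rewrite inE /= => arc_r _.
have [r_lt2|r_ge2] := ltnP r 2; first by exists None; rewrite ?inE.
have r_range : 2 <= r < 5 by rewrite r_ge2 ltn_ord.
have [r' r'5 /and3P[arc_r' adj_rr' depth_lt]] := gadget_arc_descent r_range arc_r.
by exists (Some (i, Ordinal r'5)); rewrite ?inE /= ?eqxx ?arc_r' ?adj_rr'.
Qed.

Lemma cds_of_antichain g h : cds_of g \subset cds_of h -> g = h.
Proof.
move/subsetP => sub; apply/ffunP => i; apply: gadget_arc_inj => r r5 arc_r.
by have := sub (Some (i, Ordinal r5)); rewrite !inE; apply.
Qed.

Lemma copy_meets_dominating (S : {set vertex}) i :
  dominating g2_adj S -> exists r, Some (i, r) \in S.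
Proof.
move=> /forallP/(_ (Some (i, inord 2))) dom2.
have [in_S|notin_S] := boolP (Some (i, inord 2) \in S); first by exists (inord 2).
have /existsP[v /andP[vS adj_v]] := implyP dom2 notin_S.
have [|r' vE _] := g2_adj_copy _ adj_v; first by rewrite inordK.
by exists r'; rewrite -vE.
Qed.

Lemma cds_has_root (S : {set vertex}) :
  1 < #|I| -> connected_dominating g2_adj S -> None \in S.
Proof.
move=> /card_gt1P[i [j [_ _ ij]]] /andP[dom conn]; apply/negPn/negP => rootNS.
have [ri iS] := copy_meets_dominating i dom; have [rj jS] := copy_meets_dominating j dom.
pose copy_i (v : vertex) := if v is Some (k, _) then k == i else false.
have : copy_i (Some (j, rj)).
  apply: (induced_connected_closed conn iS jS) => [[[k r]|] v|]; rewrite /= ?eqxx //.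
  move=> /eqP -> /and3P[_ vS]; case: v vS => [[k' r']|] //= vS.
    by case/andP => /eqP <-.
  by rewrite (negbTE rootNS) in vS.
by rewrite /= eq_sym (negbTE ij).
Qed.

Lemma copy_dominated (S : {set vertex}) i r : dominating g2_adj S -> 2 <= r < 5 ->
  [|| Some (i, inord r) \in S, Some (i, inord r.-1) \in S
    | Some (i, inord (r.+1 %% 5)) \in S].
Proof.
move=> /forallP/(_ (Some (i, inord r))) dom_r r_range.
have [//|notin_S] := boolP (Some (i, inord r) \in S).
have /existsP[v /andP[vS adj_v]] := implyP dom_r notin_S.
have [|r' vE] := g2_adj_copy _ adj_v; first by rewrite inordK; lia.
rewrite inordK; last lia.
move=> adj_rr'; have : (r' == r.-1 :> nat) || (r' == r.+1 %% 5 :> nat).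
  by move: adj_rr'; rewrite /gadget_adj; have := ltn_ord r'; lia.
by case/orP => /eqP <-; rewrite inord_val -vE vS ?orbT.
Qed.

Lemma copy_component (S : {set vertex}) i a b r :
  induced_connected g2_adj S -> None \in S -> 2 <= a <= r -> r <= b < 5 ->
  Some (i, inord r) \in S ->
  (Some (i, inord a.-1) \in S) || (Some (i, inord (b.+1 %% 5)) \in S).
Proof.
move=> conn rootS a_r r_b rS; apply/negPn/negP => /norP[aNS bNS].
pose block (v : vertex) := if v is Some (j, q) then (j == i) && (a <= q <= b) else false.
suff : block None by [].
apply: (induced_connected_closed conn rS rootS); last by rewrite /= eqxx inordK; lia.
move=> [[j q]|] v //= /andP[/eqP -> q_ab] /and3P[_ vS adj_v].
have [|q' vE adj_qq'] := g2_adj_copy _ adj_v; first lia.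
rewrite vE /= eqxx /=; apply/negPn/negP => q'_out.
have : (q' == a.-1 :> nat) || (q' == b.+1 %% 5 :> nat).
  by move: adj_qq'; rewrite /gadget_adj; have := ltn_ord q'; lia.
by case/orP => /eqP q'E; [move: aNS | move: bNS]; rewrite -q'E inord_val -vE vS.
Qed.

Lemma cds_copy_arc (S : {set vertex}) i : 1 < #|I| -> connected_dominating g2_adj S ->
  exists o, forall r : 'I_5, gadget_arc o r -> Some (i, r) \in S.
Proof.
move=> I_gt1 cdsS; have rootS := cds_has_root I_gt1 cdsS; case/andP: cdsS => dom conn.
have [o sub] := @gadget_arc_of_local (fun r => Some (i, inord r) \in S)
  (fun r => @copy_dominated S i r dom) (fun a b r => @copy_component S i a b r conn rootS).
by exists o => r /(sub r (ltn_ord r)); rewrite inord_val.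
Qed.

Lemma cds_covers (S : {set vertex}) : 1 < #|I| -> connected_dominating g2_adj S ->
  exists h, cds_of h \subset S.
Proof.
move=> I_gt1 cdsS; have [h hS] := fin_all_exists (fun i => cds_copy_arc i I_gt1 cdsS).
exists (finfun h); apply/subsetP => -[[i r]|]; rewrite inE ?ffunE; first exact: hS.
by move=> _; apply: cds_has_root.
Qed.

Lemma num_minimal_cds_g2 : 1 < #|I| -> num_minimal_cds g2_adj = 4 ^ #|I|.
Proof.
move=> I_gt1; rewrite /num_minimal_cds (@minimal_cds_setE _ g2_adj (cds_of @: setT)).
- rewrite card_imset ?cardsT ?card_ffun ?card_ord // => g h gh.
  by apply: cds_of_antichain; rewrite gh.
- by move=> _ /imsetP[h _ ->]; apply: cds_of_cds.
- by move=> B /(cds_covers I_gt1)[h hB]; exists (cds_of h); rewrite ?imset_f ?inE.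
- by move=> _ _ /imsetP[g _ ->] /imsetP[h _ ->] /cds_of_antichain ->.
Qed.

End Construction.

(* 1.3195^5 < 4. *)
Lemma four_pow_ge k : ((13195%:R / 10000%:R : rat) ^+ (5 * k) <= ((4 ^ k)%N)%:R)%R.
Proof.
rewrite GRing.exprM GRing.natrX; apply: Num.Theory.lerXn2r; rewrite ?Num.Theory.nnegrE; lra.
Qed.

Theorem mainTheorem15 :
  forall k : nat, 2 <= k ->
  exists e : rel 'I_(5 * k + 1),
    [/\ simple_graph e, connected_graph e, two_degenerate e,
        num_minimal_cds e = 4 ^ k
      & (((13195%:R / 10000%:R : rat) ^+ (5 * k)) <= ((4 ^ k)%N)%:R)%R].
Proof.
move=> k k_ge2.
have card_V : #|'I_(5 * k + 1)| = #|{: option ('I_k * 'I_5)}|.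
  by rewrite card_option card_prod !card_ord addn1 mulnC.
have [f [g fK gK]] := card_bijective card_V.
exists (relpre f (@g2_adj 'I_k)); split.
- exact/(simple_graph_relpre f)/g2_adj_simple.
- apply: (connected_graph_relpre fK gK).
  exact: connected_of_cds (@g2_adj_sym _) (cds_of_cds [ffun=> ord0]).
- apply: (two_degenerate_relpre fK gK).
  exact: two_degenerate_of_key (@g2_later_neighbours_le2 _).
- by rewrite (num_minimal_cds_relpre fK gK) num_minimal_cds_g2 card_ord.
- exact: four_pow_ge.
Qed.
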